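(* Let $G_1=(V,D_1)$ and $G_2=(V,D_2)$ be two simple directed graphs on the same node set $V$. If at least one of $G_1,G_2$ is not complete and there exists a node $i\in V$ such that $|\mathrm{ch}_1(i)|\neq|\mathrm{ch}_2(i)|$, then $G_1$ and $G_2$ have different Jacobian matroids.
   Context: A directed graph $G=(V,D)$ has a finite node set $V$ and edge set $D\subseteq V\times V$ of ordered pairs $(i,j)$, $i\neq j$, written $i\to j$. It is simple if $(i,j)$ and $(j,i)$ are never both in $D$. It is complete if every pair of distinct nodes is adjacent, i.e. joined by an edge in some direction. $\mathrm{ch}_k(i)=\{j:(i,j)\in D_k\}$ is the set of children of $i$ in $G_k$. For $G=(V,D)$ let $\Lambda=(\lambda_{ij})$ be the $V\times V$ matrix with indeterminate entries $\lambda_{ij}$ for $(i,j)\in D$ and zeros elsewhere, and let $s$ be a further indeterminate. The precision parameterization is $\psi_G(\Lambda,s)=s(I-\Lambda)(I-\Lambda)^T=K=(K_{ij})$. The (transposed) Jacobian $J=J(\psi_G)$ has one row for each parameter $\lambda_{kl}$, $(k,l)\in D$, and one row for $s$. It has one column for each entry $K_{ij}$ with $i\le j$ (equivalently, for each unordered pair $\{i,j\}$, including $i=j$). The entry in row $\theta$, column $K_{ij}$ is $\partial K_{ij}/\partial\theta$. The Jacobian matroid of $G$ is the matroid on this set of columns in which a set of columns is independent iff the columns are linearly independent over the field $\mathbb{R}(\lambda,s)$ of rational functions in the parameters. *)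

From HB Require Import structures.
From mathcomp Require Import all_boot all_order all_algebra.
From mathcomp Require Import fraction.
From mathcomp Require Import Rstruct.
From mathcomp.multinomials Require Import mpoly.
From Stdlib Require Rdefinitions.

Set Implicit Arguments.
Unset Strict Implicit.
Unset Printing Implicit Defensive.

Import GRing.Theory.
Local Open Scope ring_scope.

Definition digraph (n : nat) (D : {set 'I_n * 'I_n}) : Prop :=
  forall e, e \in D -> e.1 != e.2.

Definition simple_digraph (n : nat) (D : {set 'I_n * 'I_n}) : Prop :=
  forall i j : 'I_n, ~ ((i, j) \in D /\ (j, i) \in D).

Definition complete_digraph (n : nat) (D : {set 'I_n * 'I_n}) : Prop :=
  forall i j : 'I_n, i != j -> ((i, j) \in D) || ((j, i) \in D).

Definition ch (n : nat) (D : {set 'I_n * 'I_n}) (i : 'I_n) : {set 'I_n} :=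
  [set j | (i, j) \in D].

(* Indeterminates: lambda_{ij} is variable number i*n+j, s is variable n*n. *)
Definition nvars (n : nat) : nat := (n * n).+1.
Definition lam_idx (n : nat) (i j : 'I_n) : 'I_(nvars n) := inord (i * n + j).
Definition s_idx (n : nat) : 'I_(nvars n) := ord_max.

Definition polyR (n : nat) := {mpoly Rdefinitions.R[nvars n]}.
Definition ratfun (n : nat) := {fraction polyR n}.

Definition Lambda (n : nat) (D : {set 'I_n * 'I_n}) : 'M[polyR n]_n :=
  \matrix_(i, j) (if (i, j) \in D then 'X_(lam_idx i j) else 0).

Definition Kmat (n : nat) (D : {set 'I_n * 'I_n}) : 'M[polyR n]_n :=
  'X_(s_idx n) *: ((1%:M - Lambda D) *m (1%:M - Lambda D)^T).

(* columns: entries K_ij with i <= j (unordered pairs incl. i = j) *)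
Definition col_index (n : nat) := {p : 'I_n * 'I_n | (nat_of_ord p.1 <= nat_of_ord p.2)%N}.

Definition params (n : nat) (D : {set 'I_n * 'I_n}) : {set 'I_(nvars n)} :=
  s_idx n |: [set lam_idx e.1 e.2 | e in D].

(* The column of the (transposed) Jacobian corresponding to K_ij, as a column
   vector over R(lambda, s) indexed by the variables; the entry in row theta is
   dK_ij/dtheta for theta a parameter (rows of non-parameters are omitted by
   setting them to 0; they are identically 0 anyway). *)
Definition jac_column (n : nat) (D : {set 'I_n * 'I_n}) (c : col_index n)
  : 'cV[ratfun n]_(nvars n) :=
  \col_(t < nvars n)
     (if t \in params D
      then tofrac (mderiv t (Kmat D (val c).1 (val c).2))
      else 0).

Definition jac_indep (n : nat) (D : {set 'I_n * 'I_n}) (S : {set col_index n}) : bool :=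
  free [seq jac_column D c | c <- enum S].

Definition jacobian_matroid (n : nat) (D : {set 'I_n * 'I_n}) : {set {set col_index n}} :=
  [set S | jac_indep D S].

(* The Jacobian matroid has rank |D| + 1: the columns vanish outside the
   |D| + 1 parameter rows, and at Lambda = 0 the columns K_ii (for s) and
   K_uw (for lambda_uw) give an invertible diagonal minor, so they are
   independent over R(lambda, s).  For a node i, the columns K_xy with
   x, y <> i vanish in the rows lambda_iw, so at most
   |{e in D | e.1 <> i}| + 1 of them are independent; if D is not complete,
   evaluating at a point that weights only edges into i gives that many
   independent ones through a block-triangular minor.  Hence two simple
   graphs with the same matroid, one of them not complete, have the same
   number of edges and |ch_2(i)| <= |ch_1(i)| at every node; as both child
   counts sum to the number of edges, they agree everywhere. *)

From mathcomp Require Import all_boot all_order all_algebra.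
From mathcomp Require Import fraction Rstruct.
From mathcomp.multinomials Require Import mpoly.
From mathcomp Require Import zify ring lra.
From Stdlib Require Rdefinitions.

Set Implicit Arguments.
Unset Strict Implicit.
Unset Printing Implicit Defensive.

Import GRing.Theory.
Local Open Scope ring_scope.

Lemma unitmx_level_triangular (K : fieldType) (N : nat) (A : 'M[K]_N)
    (lvl : 'I_N -> nat) :
  (forall i, A i i != 0) ->
  (forall i j, i != j -> (lvl j <= lvl i)%N -> A i j = 0) ->
  A \in unitmx.
Proof.
move=> Adiag Aoff; rewrite -row_free_unit; apply: inj_row_free => v vA0.
suff v0 L j : (lvl j < L)%N -> v 0 j = 0.
  by apply/rowP => j; rewrite mxE (v0 _ _ (ltnSn _)).
elim: L j => [//|L IHL] j lt_jL.
have /eqP := congr1 (fun w : 'rV_N => w 0 j) vA0.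
rewrite !mxE (bigD1 j) //= big1 ?addr0 => [|i ne_ij]; last first.
  case: (ltnP (lvl i) (lvl j)) => [lt_ij | le_ji].
    by rewrite IHL ?mul0r // (leq_trans lt_ij).
  by rewrite Aoff ?mulr0.
by rewrite mulf_eq0 (negbTE (Adiag j)) orbF => /eqP.
Qed.

Lemma free_tofrac_of_minor (R : idomainType) (m : nat) (rs : seq 'I_m)
    (F : 'I_m -> 'cV[R]_m) :
  let r := tnth (in_tuple rs) in
  \det (\matrix_(i, j) F (r i) (r j) 0) != 0 ->
  free [seq map_mx (@tofrac R) (F t) | t <- rs].
Proof.
move=> r detA; pose A : 'M_(size rs) := \matrix_(i, j) F (r i) (r j) 0.
have Afree : row_free (map_mx (@tofrac R) A).
  by rewrite row_free_unit unitmxE det_map_mx unitfE tofrac_eq0.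
set X := [tuple of [seq map_mx (@tofrac R) (F t) | t <- in_tuple rs]].
suff: free X by [].
apply/freeP => k sum_kX0 i.
have kA0 : \row_i k i *m map_mx (@tofrac R) A = 0.
  apply/rowP => j; have := congr1 (fun w : 'cV_m => w (r j) 0) sum_kX0.
  rewrite /= summxE !mxE => sum0; rewrite -[in RHS]sum0; apply: eq_bigr => l _.
  by rewrite -(tnth_nth 0 X l) tnth_map !mxE mulrC.
have /rowP/(_ i) : \row_i k i = 0 by apply: (row_free_inj Afree); rewrite /= kA0 mul0mx.
by rewrite !mxE.
Qed.

Lemma free_imset (K : fieldType) (vT : vectType K) (T U : finType)
    (v : U -> vT) (f : T -> U) (A : {set T}) :
  free [seq v (f t) | t <- enum A] ->
  free [seq v c | c <- enum (f @: A)] /\ #|f @: A| = #|A|.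
Proof.
move=> freeA; have uniq_fA : uniq [seq f t | t <- enum A].
  by apply: (@map_uniq _ _ v); rewrite -map_comp (free_uniq freeA).
have perm_fA : perm_eq (enum (f @: A)) [seq f t | t <- enum A].
  apply: uniq_perm => // [|c]; first exact: enum_uniq.
  by rewrite mem_enum; apply/imsetP/mapP => -[t At ->]; exists t; rewrite ?mem_enum in At *.
split; first by rewrite (perm_free (perm_map v perm_fA)) -map_comp.
by rewrite cardE (perm_size perm_fA) size_map -cardE.
Qed.

Lemma free_size_support (K : fieldType) (m : nat) (s : seq 'cV[K]_m)
    (Rw : {set 'I_m}) :
  free s -> (forall v, v \in s -> forall t, t \notin Rw -> v t 0 = 0) ->
  (size s <= #|Rw|)%N.
Proof.
move=> /eqP dim_s supp_s; rewrite -dim_s.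
pose E := [seq delta_mx t 0 : 'cV[K]_m | t <- enum Rw].
have sub_sE : (<<s>> <= <<E>>)%VS.
  apply/span_subvP => v vs; rewrite [v]matrix_sum_delta; apply: memv_suml => t _.
  apply: memv_suml => j _; rewrite (ord1 j).
  have [tRw | tNRw] := boolP (t \in Rw); last by rewrite supp_s // scale0r mem0v.
  by apply/memvZ/memv_span/map_f; rewrite mem_enum.
by rewrite (leq_trans (dimvS sub_sE)) // (leq_trans (dim_span E)) // size_map -cardE.
Qed.

Lemma mderivXU (k : nat) (R : nzRingType) (i j : 'I_k) :
  ('X_j : {mpoly R[k]})^`M(i) = (j == i)%:R.
Proof.
rewrite mderivX mnm1E; case: eqP => [->|_]; last by rewrite scale0r.
have -> : (U_(i) - U_(i) = 0)%MM by apply/mnmP => l; rewrite mnmBE subnn mnm0E.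
by rewrite mpolyX0 scale1r.
Qed.

Section ParameterIndex.
Variable n : nat.
Implicit Types (i j u w : 'I_n) (E : {set 'I_n * 'I_n}).

Lemma lam_idx_val i j : lam_idx i j = (i * n + j)%N :> nat.
Proof. by rewrite /lam_idx inordK // /nvars; have := ltn_ord i; have := ltn_ord j; nia. Qed.

Lemma eq_lam_idx i j u w : (lam_idx i j == lam_idx u w) = ((i, j) == (u, w)).
Proof.
apply/eqP/eqP => [/(congr1 val)|[-> ->] //]; rewrite /= !lam_idx_val => eq_ij.
have [lt_jn lt_wn] := (ltn_ord j, ltn_ord w).
have n_gt0 : (0 < n)%N by apply: leq_ltn_trans lt_jn.
have /val_inj -> : nat_of_ord i = u.
  by move: (congr1 (divn^~ n) eq_ij); rewrite /= !divnMDl // !divn_small // !addn0.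
have /val_inj -> // : nat_of_ord j = w.
by move: (congr1 (modn^~ n) eq_ij); rewrite /= !modnMDl !modn_small.
Qed.

Lemma lam_idx_eq_s i j : (lam_idx i j == s_idx n) = false.
Proof.
apply/negbTE/eqP => /(congr1 val); rewrite /= lam_idx_val.
by have := ltn_ord i; have := ltn_ord j; nia.
Qed.

Definition param_edge (t : 'I_(nvars n)) : option ('I_n * 'I_n) :=
  [pick e | lam_idx e.1 e.2 == t].

Lemma param_edge_lam i j : param_edge (lam_idx i j) = Some (i, j).
Proof.
rewrite /param_edge; case: pickP => [[u w] /=|/(_ (i, j))]; last by rewrite eqxx.
by rewrite eq_lam_idx => /eqP ->.
Qed.

Lemma param_edge_s : param_edge (s_idx n) = None.
Proof. by rewrite /param_edge; case: pickP => // -[u w]; rewrite lam_idx_eq_s. Qed.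

Lemma paramsP E t : t \in params E ->
  t = s_idx n \/ exists u w, (u, w) \in E /\ t = lam_idx u w.
Proof. by case/setU1P => [->|/imsetP [[u w] uwE ->]]; [left | right; exists u, w]. Qed.

Lemma s_idx_params E : s_idx n \in params E.
Proof. exact: setU11. Qed.

Lemma lam_idx_params E u w : (lam_idx u w \in params E) = ((u, w) \in E).
Proof.
rewrite !inE lam_idx_eq_s /=; apply/imsetP/idP => [[[x y] xyE]|uwE].
  by move/eqP; rewrite eq_lam_idx => /eqP ->.
by exists (u, w).
Qed.

Lemma card_params E : #|params E| = #|E|.+1.
Proof.
rewrite cardsU1 card_in_imset => [|[u w] [x y] _ _ /eqP]; last by rewrite eq_lam_idx => /eqP.
suff -> : s_idx n \in [set lam_idx e.1 e.2 | e in E] = false by [].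
by apply/negbTE/imsetP => -[e _ /eqP]; rewrite eq_sym lam_idx_eq_s.
Qed.
End ParameterIndex.

Section Indicators.
Variables (n : nat) (T : nzRingType).
Implicit Types (x y u w : 'I_n).

Lemma sum_delta (w : 'I_n) (f : 'I_n -> T) :
  \sum_k (k == w)%:R * f k = f w.
Proof.
rewrite (bigD1 w) //= eqxx mul1r big1 ?addr0 // => k /negPf ->.
by rewrite mul0r.
Qed.

Lemma sum_indicator_mul x y :
  \sum_k (x == k)%:R * (y == k)%:R = (x == y)%:R :> T.
Proof.
under eq_bigr => k _ do rewrite -natrM mulnb.
rewrite (bigD1 x) //= eqxx eq_sym big1 ?addr0 // => k /negbTE xk.
by rewrite eq_sym xk.
Qed.

Lemma indicator_pair_eq0 x y u w :
  (x, y) != (u, w) -> (y, x) != (u, w) ->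
  (x == u)%:R * (y == w)%:R + (y == u)%:R * (x == w)%:R = 0 :> T.
Proof.
by rewrite !xpair_eqE => /negbTE xy /negbTE yx; rewrite -!natrM !mulnb xy yx addr0.
Qed.
End Indicators.

Section JacobianEntries.
Variable n : nat.
Implicit Types (D : {set 'I_n * 'I_n}) (a k x y u w : 'I_n).

Definition IminusL D a k : polyR n :=
  (a == k)%:R - (if (a, k) \in D then 'X_(lam_idx a k) else 0).

Lemma Kmat_E D x y :
  Kmat D x y = 'X_(s_idx n) * \sum_k IminusL D x k * IminusL D y k.
Proof. by rewrite !mxE; congr (_ * _); apply: eq_bigr => k _; rewrite !mxE. Qed.

Lemma Kmat_sym D x y : Kmat D x y = Kmat D y x.
Proof. by rewrite !Kmat_E; congr (_ * _); apply: eq_bigr => k _; rewrite mulrC. Qed.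

Lemma mderiv_IminusL D t a k :
  (IminusL D a k)^`M(t) = - (((a, k) \in D) && (lam_idx a k == t))%:R.
Proof.
rewrite mderivB -mpolyC_nat mderivC sub0r.
by case: ((a, k) \in D); rewrite ?mderivXU ?mderiv0 ?oppr0.
Qed.

Lemma mderiv_Kmat_s D x y :
  (Kmat D x y)^`M(s_idx n) = \sum_k IminusL D x k * IminusL D y k.
Proof.
rewrite Kmat_E mderivM mderivXU eqxx mul1r raddf_sum [X in _ * X]big1 ?mulr0 ?addr0 // => k _.
by rewrite /= mderivM !mderiv_IminusL !lam_idx_eq_s !andbF /= oppr0 mul0r mulr0 addr0.
Qed.

Lemma mderiv_Kmat_lam D x y u w : (u, w) \in D ->
  (Kmat D x y)^`M(lam_idx u w) =
  - ('X_(s_idx n) * ((x == u)%:R * IminusL D y w + (y == u)%:R * IminusL D x w)).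
Proof.
move=> uwD; rewrite Kmat_E mderivM mderivXU eq_sym lam_idx_eq_s mul0r add0r.
rewrite raddf_sum -mulrN; congr (_ * _).
have dIL a k : (IminusL D a k)^`M(lam_idx u w) = - ((a == u)%:R * (k == w)%:R).
  rewrite mderiv_IminusL eq_lam_idx xpair_eqE -natrM mulnb.
  by case: (a =P u) => [->|]; case: (k =P w) => [->|]; rewrite ?uwD ?andbF.
apply: (etrans _ (sum_delta w (fun k =>
  - ((x == u)%:R * IminusL D y k + (y == u)%:R * IminusL D x k)))).
by apply: eq_bigr => k _ /=; rewrite mderivM !dIL; ring.
Qed.
End JacobianEntries.

Section JacobianColumns.
Variable n : nat.
Local Notation R := Rdefinitions.R.
Implicit Types (D : {set 'I_n * 'I_n}) (a k x y u w : 'I_n).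

Definition jac_entry D (p : 'I_n * 'I_n) (t : 'I_(nvars n)) : polyR n :=
  if t \in params D then (Kmat D p.1 p.2)^`M(t) else 0.

Lemma jac_columnE D c :
  jac_column D c = map_mx (@tofrac _) (\col_t jac_entry D (val c) t).
Proof.
apply/matrixP => t j; rewrite [LHS]mxE [RHS]mxE [in RHS]mxE /jac_entry.
by case: ifP; rewrite ?tofrac0.
Qed.

Lemma jac_entry_sym D x y t : jac_entry D (x, y) t = jac_entry D (y, x) t.
Proof. by rewrite /jac_entry Kmat_sym. Qed.

Definition sym_pair (p : 'I_n * 'I_n) := if (p.1 <= p.2)%N then p else (p.2, p.1).

Lemma sym_pair_sorted p : ((sym_pair p).1 <= (sym_pair p).2)%N.
Proof. by case: p => x y; rewrite /sym_pair /=; case: (leqP x y) => // /ltnW. Qed.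

Definition sym_col (p : 'I_n * 'I_n) : col_index n :=
  exist _ (sym_pair p) (sym_pair_sorted p).

Lemma jac_entry_sym_col D p t : jac_entry D (val (sym_col p)) t = jac_entry D p t.
Proof. by case: p => x y; rewrite /= /sym_pair; case: leqP; rewrite // jac_entry_sym. Qed.

Lemma jac_column_sym_col D p :
  jac_column D (sym_col p) = map_mx (@tofrac _) (\col_t jac_entry D p t).
Proof.
by rewrite jac_columnE; congr map_mx; apply/colP => t; rewrite !mxE jac_entry_sym_col.
Qed.

Lemma jac_entry_lam_eq0 D x y u w : u != x -> u != y ->
  jac_entry D (x, y) (lam_idx u w) = 0.
Proof.
rewrite /jac_entry lam_idx_params => /negbTE ux /negbTE uy.
by case: ifP => // /mderiv_Kmat_lam ->; rewrite ![_ == u]eq_sym ux uy !mul0r addr0 mulr0 oppr0.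
Qed.

Definition param_point (L : 'I_n -> 'I_n -> R) (t : 'I_(nvars n)) : R :=
  if param_edge t is Some e then L e.1 e.2 else 1.

Definition IminusL_at (L : 'I_n -> 'I_n -> R) D a k : R :=
  (a == k)%:R - (if (a, k) \in D then L a k else 0).

Lemma meval_IminusL L D a k : (IminusL D a k).@[param_point L] = IminusL_at L D a k.
Proof.
rewrite mevalB -mpolyC_nat mevalC; congr (_ - _).
by case: ifP => _; rewrite ?meval0 // mevalXU /param_point param_edge_lam.
Qed.

Lemma jac_entry_s_at L D x y :
  (jac_entry D (x, y) (s_idx n)).@[param_point L] =
  \sum_k IminusL_at L D x k * IminusL_at L D y k.
Proof.
rewrite /jac_entry s_idx_params mderiv_Kmat_s rmorph_sum /=.
by apply: eq_bigr => k _; rewrite mevalM !meval_IminusL.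
Qed.

Lemma jac_entry_lam_at L D x y u w : (u, w) \in D ->
  (jac_entry D (x, y) (lam_idx u w)).@[param_point L] =
  - ((x == u)%:R * IminusL_at L D y w + (y == u)%:R * IminusL_at L D x w).
Proof.
move=> uwD; rewrite /jac_entry lam_idx_params uwD mderiv_Kmat_lam //.
rewrite mevalN mevalM mevalXU /param_point param_edge_s mul1r mevalD !mevalM.
by rewrite -!mpolyC_nat !mevalC !meval_IminusL.
Qed.
End JacobianColumns.

Section JacobianIndependence.
Variable n : nat.
Local Notation R := Rdefinitions.R.
Implicit Types (D : {set 'I_n * 'I_n}) (S : {set col_index n}).

Lemma jac_indep_triangular D (Rw : {set 'I_(nvars n)})
    (g : 'I_(nvars n) -> 'I_n * 'I_n) (pt : 'I_(nvars n) -> R)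
    (lvl : 'I_(nvars n) -> nat) :
  (forall t, t \in Rw -> (jac_entry D (g t) t).@[pt] != 0) ->
  (forall t t', t \in Rw -> t' \in Rw -> t != t' -> (lvl t <= lvl t')%N ->
     (jac_entry D (g t') t).@[pt] = 0) ->
  jac_indep D [set sym_col (g t) | t in Rw] /\
  #|[set sym_col (g t) | t in Rw]| = #|Rw|.
Proof.
move=> diag_g offdiag_g; apply: free_imset.
under eq_map => t do rewrite jac_column_sym_col.
apply: free_tofrac_of_minor; set r := tnth _.
have r_Rw i : r i \in Rw by rewrite -mem_enum mem_tnth.
have r_inj : injective r by apply/tuple_uniqP/enum_uniq.
set A := \matrix_(i, j) _.
have : map_mx (meval pt) A \in unitmx.
  apply: (@unitmx_level_triangular _ _ _ (lvl \o r)) => [i|i j ne_ij le_ji].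
    by rewrite !mxE diag_g.
  by rewrite !mxE offdiag_g ?(inj_eq r_inj) // eq_sym.
by rewrite unitmxE unitfE det_map_mx; apply: contraNneq => ->; rewrite /= meval0.
Qed.

Lemma jac_indep_card_support D S (Rw : {set 'I_(nvars n)}) :
  jac_indep D S ->
  (forall c, c \in S -> forall t, t \notin Rw -> jac_entry D (val c) t = 0) ->
  (#|S| <= #|Rw|)%N.
Proof.
move=> indS suppS; rewrite cardE -(size_map (jac_column D)).
apply: free_size_support indS _ => _ /mapP [c cS ->] t tNRw.
by rewrite jac_columnE !mxE suppS ?tofrac0 // -mem_enum.
Qed.

Lemma jac_indep_card_le D S : jac_indep D S -> (#|S| <= #|D|.+1)%N.
Proof.
move=> indS; rewrite -card_params; apply: jac_indep_card_support indS _ => c _ t.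
by rewrite /jac_entry => /negbTE ->.
Qed.

Definition avoids (i : 'I_n) (c : col_index n) := ((val c).1 != i) && ((val c).2 != i).

Lemma avoids_sym_col i p : avoids i (sym_col p) = (p.1 != i) && (p.2 != i).
Proof.
by case: p => x y; rewrite /avoids /= /sym_pair; case: leqP => //= _; rewrite andbC.
Qed.

Lemma jac_indep_avoids_card_le D S i :
  jac_indep D S -> {in S, forall c, avoids i c} ->
  (#|S| <= #|[set e in D | e.1 != i]|.+1)%N.
Proof.
move=> indS avS; rewrite -card_params; apply: jac_indep_card_support indS _ => c cS t.
have [tD|tND] := boolP (t \in params D); last by rewrite /jac_entry (negbTE tND).
case/paramsP: tD => [-> | [u [w [uwD ->]]]]; first by rewrite s_idx_params.
rewrite lam_idx_params !inE uwD /= negbK => /eqP ->.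
case: c cS => [[x y] le_xy] cS; have /andP [/= xi yi] := avS _ cS.
by rewrite jac_entry_lam_eq0 // eq_sym.
Qed.
End JacobianIndependence.

Section Digraphs.
Variable n : nat.
Implicit Types (D : {set 'I_n * 'I_n}) (i u w x y : 'I_n).

Lemma simple_irrefl D u w : simple_digraph D -> (u, w) \in D -> u != w.
Proof. by move=> sD uwD; apply/eqP => eq_uw; subst w; apply: (sD u u). Qed.

Lemma simple_antisym D u w : simple_digraph D -> (u, w) \in D -> (w, u) \notin D.
Proof. by move=> sD uwD; apply/negP => wuD; apply: (sD u w). Qed.

Lemma card_ch D i : #|ch D i| = #|[set e in D | e.1 == i]|.
Proof.
have inj_pair : injective (@pair _ 'I_n i) by move=> v v' [].

rewrite -(card_imset _ inj_pair); apply: eq_card => -[u w].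
rewrite !inE; apply/imsetP/andP => [[v vD [-> ->]]|[uwD /eqP ui]].
  by rewrite inE in vD.
by exists w; rewrite ?inE -?ui.
Qed.

Lemma card_edges_split D i : #|D| = (#|[set e in D | e.1 != i]| + #|ch D i|)%N.
Proof.
rewrite card_ch addnC -(cardID [set e | e.1 == i] D); congr (_ + _)%N.
  by apply: eq_card => e; rewrite !inE andbC.
by apply: eq_card => e; rewrite !inE andbC.
Qed.

Lemma card_edges_sum_ch D : #|D| = (\sum_i #|ch D i|)%N.
Proof.
rewrite -sum1_card (partition_big (fun e : 'I_n * 'I_n => e.1) xpredT) //=.
by apply: eq_bigr => i _; rewrite card_ch -sum1_card; apply: eq_bigl => e; rewrite inE.
Qed.

Lemma non_complete_nonadjacent D : ~ complete_digraph D ->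
  exists x y, [/\ x != y, (x, y) \notin D & (y, x) \notin D].
Proof.
move=> nc.
case: (boolP [exists x, exists y, (x != y) && ~~ (((x, y) \in D) || ((y, x) \in D))]).
  move=> /existsP [x /existsP [y]]; rewrite negb_or => /and3P [ne_xy xyD yxD].
  by exists x, y.
move=> /existsPn none; case: nc => x y ne_xy.
by have /existsPn/(_ y) := none x; rewrite ne_xy negbK.
Qed.

Definition anchor_pair D i a b : Prop :=
  [/\ a != i, b != i & (a, i) \in D ->
    [/\ (b, i) \in D, b != a, (a, b) \notin D & (b, a) \notin D]].

Lemma exists_anchor_pair D i : ~ complete_digraph D -> exists a b, anchor_pair D i a b.
Proof.
case/non_complete_nonadjacent => x [y [ne_xy xyD yxD]].
have lone a : a != i -> (a, i) \notin D -> exists a b, anchor_pair D i a b.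
  by move=> ai aiD; exists a, a; split=> // /(negP aiD).
have [exi | xi] := eqVneq x i; first by apply: (lone y); rewrite -exi // eq_sym.
have [eyi | yi] := eqVneq y i; first by apply: (lone x); rewrite -eyi.
have [xiD | ] := boolP ((x, i) \in D); last exact: lone.
have [yiD | ] := boolP ((y, i) \in D); last exact: lone.
by exists x, y; split=> // _; split; rewrite // eq_sym.
Qed.
End Digraphs.

Section FullRank.
Variable n : nat.
Local Notation R := Rdefinitions.R.
Implicit Types (D : {set 'I_n * 'I_n}) (x y u w : 'I_n).

Let pt0 := param_point (fun _ _ : 'I_n => 0 : R).

Lemma jac_entry_s_at0 D x y : (jac_entry D (x, y) (s_idx n)).@[pt0] = (x == y)%:R.
Proof.
rewrite jac_entry_s_at -sum_indicator_mul; apply: eq_bigr => k _.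
by rewrite /IminusL_at; do 2 case: ifP => _; rewrite ?subr0.
Qed.

Lemma jac_entry_lam_at0 D x y u w : (u, w) \in D ->
  (jac_entry D (x, y) (lam_idx u w)).@[pt0] =
  - ((x == u)%:R * (y == w)%:R + (y == u)%:R * (x == w)%:R).
Proof.
by move=> uwD; rewrite jac_entry_lam_at // /IminusL_at; do 2 case: ifP => _; rewrite ?subr0.
Qed.

Lemma exists_jac_indep_card D (i0 : 'I_n) : simple_digraph D ->
  exists2 S, jac_indep D S & #|S| = #|D|.+1.
Proof.
move=> sD; pose g t := if param_edge t is Some e then e else (i0, i0).
suff [indS cardS] : jac_indep D [set sym_col (g t) | t in params D] /\
    #|[set sym_col (g t) | t in params D]| = #|params D|.
  by exists [set sym_col (g t) | t in params D]; rewrite // cardS card_params.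
apply: (jac_indep_triangular (pt := pt0) (lvl := fun=> 0%N)) => [t | t t'].
  case/paramsP => [-> | [u [w [uwD ->]]]].
    by rewrite /g param_edge_s jac_entry_s_at0 eqxx oner_eq0.
  rewrite /g param_edge_lam jac_entry_lam_at0 // [w == u]eq_sym.
  rewrite (negbTE (simple_irrefl sD uwD)).
  by rewrite !eqxx mulr0 addr0 mulr1 oppr_eq0 oner_eq0.
case/paramsP => [-> | [u [w [uwD ->]]]] /paramsP [-> | [u' [w' [uwD' ->]]]] ne_tt' _.
- by rewrite eqxx in ne_tt'.
- by rewrite /g param_edge_lam jac_entry_s_at0 (negbTE (simple_irrefl sD uwD')).
- rewrite /g param_edge_s jac_entry_lam_at0 // indicator_pair_eq0 ?oppr0 //;
    by apply: contraNneq (simple_irrefl sD uwD) => -[<- <-].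
rewrite /g param_edge_lam jac_entry_lam_at0 // indicator_pair_eq0 ?oppr0 //.
  by rewrite eq_sym -eq_lam_idx.
by apply: contraNneq (simple_antisym sD uwD') => ->.
Qed.
End FullRank.

Section AvoidingWitness.
Variable n : nat.
Local Notation R := Rdefinitions.R.
Variables (D : {set 'I_n * 'I_n}) (i a b : 'I_n).
Hypotheses (sD : simple_digraph D) (anchor_ab : anchor_pair D i a b).
Implicit Types (k u w x y : 'I_n).

(* At [pt] only the edges [p -> i] with [p != a] carry weight: row [a] of
   [I - Lambda] is then a unit vector and [(I - Lambda) p i = -1] for every
   other parent [p] of [i].  The row [lam_idx a i] (present only if [a] is a
   parent of [i]) gets the column [K_ab], which works because [b] is another
   parent of [i] not adjacent to [a].  Ordered by [lvl], the minor at [pt] is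
   block triangular with diagonal blocks that are themselves diagonal. *)
Let L u w : R := ((w == i) && (u != a))%:R.
Let pt := param_point L.

Let g t : 'I_n * 'I_n :=
  if param_edge t is Some (u, w) then
    if w == i then (if u == a then (a, b) else (u, u)) else (u, w)
  else (a, a).

Let lvl t : nat :=
  if param_edge t is Some (_, w) then (w == i : nat) else 2.

Let a_neq_i : a != i. Proof. by case: anchor_ab. Qed.

Let IminusL_at_off_i x y : y != i -> IminusL_at L D x y = (x == y)%:R.
Proof. by move=> /negbTE yi; rewrite /IminusL_at /L yi; case: ifP; rewrite subr0. Qed.

Let IminusL_at_anchor k : IminusL_at L D a k = (a == k)%:R.
Proof. by rewrite /IminusL_at /L eqxx andbF; case: ifP; rewrite subr0. Qed.

Let IminusL_at_parent p : (p, i) \in D -> p != a -> IminusL_at L D p i = -1.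
Proof.
move=> piD /negbTE pa; rewrite /IminusL_at /L piD eqxx pa.
by rewrite (negbTE (simple_irrefl sD piD)) sub0r.
Qed.

Let entry_off_i x y u w : (u, w) \in D -> w != i ->
  (jac_entry D (x, y) (lam_idx u w)).@[pt] =
  - ((x == u)%:R * (y == w)%:R + (y == u)%:R * (x == w)%:R).
Proof. by move=> uwD wi; rewrite jac_entry_lam_at // !IminusL_at_off_i. Qed.

Let witness_diag t : t \in params [set e in D | e.1 != i] -> (jac_entry D (g t) t).@[pt] != 0.
Proof.
case/paramsP => [-> | [u [w [/setIdP [uwD ui] ->]]]].
  rewrite /g param_edge_s jac_entry_s_at.
  under eq_bigr do rewrite IminusL_at_anchor.
  by rewrite sum_indicator_mul eqxx oner_eq0.
rewrite /g param_edge_lam; have [wi | wi] := eqVneq w i; last first.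
  rewrite entry_off_i // [w == u]eq_sym (negbTE (simple_irrefl sD uwD)) !eqxx.
  by apply/eqP => /=; lra.
subst w; have [ua | ua] := eqVneq u a.
  subst u; have [_ _ /(_ uwD) [biD ba _ _]] := anchor_ab.
  rewrite jac_entry_lam_at // eqxx (negbTE ba) (IminusL_at_parent biD ba).
  by apply/eqP => /=; lra.
by rewrite jac_entry_lam_at // eqxx (IminusL_at_parent uwD ua); apply/eqP => /=; lra.
Qed.

Let witness_offdiag t t' :
  t \in params [set e in D | e.1 != i] -> t' \in params [set e in D | e.1 != i] ->
  t != t' -> (lvl t <= lvl t')%N -> (jac_entry D (g t') t).@[pt] = 0.
Proof.
case/paramsP => [-> | [u [w [/setIdP [uwD ui] ->]]]] /paramsP t'E ne_tt' le_lvl.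
  case: t'E ne_tt' le_lvl => [-> | [u' [w' [_ ->]]]]; first by rewrite eqxx.
  by rewrite /lvl param_edge_s param_edge_lam; case: (w' == i).
have IA_a_i : IminusL_at L D a i = 0 by rewrite IminusL_at_anchor (negbTE a_neq_i).
have [wi | wi] := eqVneq w i.
  subst w; case: t'E ne_tt' le_lvl => [-> | [u' [w' [/setIdP [uwD' u'i] ->]]]] ne_tt' le_lvl.
    by rewrite /g param_edge_s jac_entry_lam_at // IA_a_i !mulr0 addr0 oppr0.
  move: le_lvl ne_tt'; rewrite /lvl /g !param_edge_lam eqxx eq_lam_idx.
  case: (eqVneq w' i) => // -> _; rewrite xpair_eqE eqxx andbT => ne_uu'.
  case: (eqVneq u' a) => [eq_u'a | _]; rewrite jac_entry_lam_at //.
    by rewrite [a == u]eq_sym -{1}eq_u'a (negbTE ne_uu') IA_a_i mul0r mulr0 addr0 oppr0.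
  by rewrite [u' == u]eq_sym (negbTE ne_uu') mul0r addr0 oppr0.
have neq_loop x : (x, x) != (u, w) by apply: contraNneq (simple_irrefl sD uwD) => -[<- <-].
have neq_nonedge p : p \notin D -> p != (u, w) by apply: contraNneq => ->.
have entry_eq0 x y : (x, y) != (u, w) -> (y, x) != (u, w) ->
    (jac_entry D (x, y) (lam_idx u w)).@[pt] = 0.
  by move=> ne_xy ne_yx; rewrite entry_off_i // indicator_pair_eq0 ?oppr0.
case: t'E ne_tt' le_lvl => [-> | [u' [w' [/setIdP [uwD' _] ->]]]] ne_tt' _.
  by rewrite /g param_edge_s entry_eq0.
rewrite /g param_edge_lam; case: (eqVneq w' i) => [ew'i | w'i].
  case: (eqVneq u' a) => [eu'a | _]; last by rewrite entry_eq0.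
  have [_ _ /(_ _) [|_ _ abD baD]] := anchor_ab; first by rewrite -eu'a -ew'i.
  by rewrite entry_eq0 // neq_nonedge.
rewrite entry_eq0 ?(neq_nonedge _ (simple_antisym sD uwD')) //.
by move: ne_tt'; rewrite eq_lam_idx eq_sym.
Qed.

Lemma exists_jac_indep_avoids : exists S,
  [/\ jac_indep D S, {in S, forall c, avoids i c} &
      #|S| = #|[set e in D | e.1 != i]|.+1].
Proof.
have [indS cardS] := jac_indep_triangular witness_diag witness_offdiag.
exists [set sym_col (g t) | t in params [set e in D | e.1 != i]].
split=> //; last by rewrite cardS card_params.
have [_ b_neq_i _] := anchor_ab.
move=> _ /imsetP [t tE ->]; rewrite avoids_sym_col.
case/paramsP: tE => [-> | [u [w [/setIdP [_ ui] ->]]]];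
  rewrite /g ?param_edge_s ?param_edge_lam /=.
  by rewrite a_neq_i.
case: (eqVneq w i) => [_ | wi]; last by apply/andP.
by case: (eqVneq u a) => _ /=; rewrite ?a_neq_i ?ui.
Qed.
End AvoidingWitness.

Section JacobianMatroid.
Variable n : nat.
Implicit Types (D : {set 'I_n * 'I_n}) (i : 'I_n).

Lemma mem_jacobian_matroid D S : (S \in jacobian_matroid D) = jac_indep D S.
Proof. by rewrite inE. Qed.

Lemma jacobian_matroid_indep D1 D2 S :
  jacobian_matroid D1 = jacobian_matroid D2 -> jac_indep D1 S -> jac_indep D2 S.
Proof. by move=> eqM; rewrite -!mem_jacobian_matroid eqM. Qed.

Lemma jacobian_matroid_card_edges_le D1 D2 i :
  simple_digraph D1 -> jacobian_matroid D1 = jacobian_matroid D2 ->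
  (#|D1| <= #|D2|)%N.
Proof.
move=> sD1 eqM; have [S indS cardS] := exists_jac_indep_card i sD1.
by have := jac_indep_card_le (jacobian_matroid_indep eqM indS); rewrite cardS.
Qed.

Lemma jacobian_matroid_card_out_le D1 D2 i :
  simple_digraph D1 -> ~ complete_digraph D1 ->
  jacobian_matroid D1 = jacobian_matroid D2 ->
  (#|[set e in D1 | e.1 != i]| <= #|[set e in D2 | e.1 != i]|)%N.
Proof.
move=> sD1 ncD1 eqM; have [a [b anchor_ab]] := exists_anchor_pair i ncD1.
have [S [indS avS cardS]] := exists_jac_indep_avoids sD1 anchor_ab.
by have := jac_indep_avoids_card_le (jacobian_matroid_indep eqM indS) avS; rewrite cardS.
Qed.

Lemma jacobian_matroid_card_ch_le D1 D2 i :
  simple_digraph D1 -> simple_digraph D2 -> ~ complete_digraph D1 ->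
  jacobian_matroid D1 = jacobian_matroid D2 -> (#|ch D2 i| <= #|ch D1 i|)%N.
Proof.
move=> sD1 sD2 ncD1 eqM.
have le12 := jacobian_matroid_card_edges_le i sD1 eqM.
have le21 := jacobian_matroid_card_edges_le i sD2 (esym eqM).
have le_out := jacobian_matroid_card_out_le i sD1 ncD1 eqM.
have := card_edges_split D1 i; have := card_edges_split D2 i; lia.
Qed.
End JacobianMatroid.

Theorem theorem4p5 (n : nat) (D1 D2 : {set 'I_n * 'I_n}) :
  digraph D1 -> digraph D2 ->
  simple_digraph D1 -> simple_digraph D2 ->
  (~ complete_digraph D1 \/ ~ complete_digraph D2) ->
  (exists i : 'I_n, #|ch D1 i| != #|ch D2 i|) ->
  jacobian_matroid D1 <> jacobian_matroid D2.
Proof.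
move=> _ _ sD1 sD2 ncD [i ne_ch] eqM.
wlog ncD1 : D1 D2 sD1 sD2 ne_ch eqM {ncD} / ~ complete_digraph D1.
  move=> hwlog; case: ncD => [ncD1 | ncD2]; first exact: (hwlog D1 D2 sD1 sD2 ne_ch eqM).
  by apply: (hwlog D2 D1 sD2 sD1 _ (esym eqM) ncD2); rewrite eq_sym.
have le_ch j := jacobian_matroid_card_ch_le j sD1 sD2 ncD1 eqM.
have eq_sum : (\sum_j #|ch D2 j| = \sum_j #|ch D1 j|)%N.
  rewrite -!card_edges_sum_ch; apply/eqP; rewrite eqn_leq.
  rewrite (jacobian_matroid_card_edges_le i sD1 eqM).
  by rewrite (jacobian_matroid_card_edges_le i sD2 (esym eqM)).
have [_] := leqif_sum (P := xpredT) (fun j _ => leqif_eq (le_ch j)).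
rewrite eq_sum eqxx => /esym/forallP/(_ i).
by rewrite eq_sym (negbTE ne_ch).
Qed.
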